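(* Under the standing setting below, let $\alpha>0$, $C_0>0$, let $(x_0,y_0)$ satisfy $h(x_0,y_0)\le\alpha^2C_0$, take $\rho(x,y)=\|\nabla h(x,y)\|\,h(x_0,y_0)^{1/2}$, fix an integer $K\ge1$ and $\gamma=\min\{K^{-2/3},1/L_f\}$, and run the Algorithm. Define $B_\Delta=2C_f+\alpha^2\sqrt{C_0}$. Then $$\frac1K\sum_{k=0}^{K-1}\big(\|\Delta_k^x\|^2+\|\Delta_k^y\|^2\big)\le\frac{2(f_0-\bar f)}{\gamma K}+\alpha^2(B_\Delta^2+C_0),$$ and $$\frac1K\sum_{k=0}^{K-1}h_k\le\alpha^2C_0+\frac{\gamma^2L_hB_\Delta^2}{2}\cdot\frac{K-1}{2},$$ where $f_0=f(x_0,y_0)$.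
   Context: Standing setting. $f,g:\mathbb{R}^n\times\mathbb{R}^m\to\mathbb{R}$. $f$ is continuously differentiable, $\bar f:=\inf f>-\infty$, $\nabla f$ is $L_f$-Lipschitz, and $\|\nabla f\|\le C_f$ everywhere. $g$ is twice continuously differentiable, and $h(x,y):=\|\nabla_y g(x,y)\|^2$ is continuously differentiable with $\nabla h$ being $L_h$-Lipschitz ($L_h>0$). Write $\nabla h=(\nabla_x h,\nabla_y h)$, $f_k=f(x_k,y_k)$, $h_k=h(x_k,y_k)$, $\nabla f_k=\nabla f(x_k,y_k)$, $\nabla h_k=\nabla h(x_k,y_k)$, etc. Given $\rho\ge0$, $\alpha,\gamma>0$, $(x_0,y_0)$, the Algorithm iterates for $k\ge0$: $\lambda_k=\big[-\nabla_x h_k^\top\nabla_x f_k-\nabla_y h_k^\top\nabla_y f_k+\alpha\rho(x_k,y_k)\big]_+/(\|\nabla_x h_k\|^2+\|\nabla_y h_k\|^2)$ if $\nabla h_k\ne0$, $\lambda_k=0$ otherwise ($[t]_+=\max\{0,t\}$); $\Delta_k^x=-\nabla_x f_k-\lambda_k\nabla_x h_k$, $\Delta_k^y=-\nabla_y f_k-\lambda_k\nabla_y h_k$; $x_{k+1}=x_k+\gamma\Delta_k^x$, $y_{k+1}=y_k+\gamma\Delta_k^y$. *)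

From HB Require Import structures.
From mathcomp Require Import all_boot all_order all_algebra.
From mathcomp Require Import all_classical all_reals all_analysis.
Set Implicit Arguments. Unset Strict Implicit. Unset Printing Implicit Defensive.
Import Order.TTheory GRing.Theory Num.Theory.
Import numFieldNormedType.Exports.
Local Open Scope ring_scope.
Local Open Scope classical_set_scope.

Section Defs.
Variables (R : realType) (n m : nat).

Definition pt := ('rV[R]_n * 'rV[R]_m)%type.

Definition dotv (k : nat) (u v : 'rV[R]_k) : R := \sum_(i < k) u 0 i * v 0 i.
Definition enorm (k : nat) (u : 'rV[R]_k) : R := Num.sqrt (dotv u u).

Definition pnorm (u : 'rV[R]_n) (v : 'rV[R]_m) : R :=
  Num.sqrt (enorm u ^+ 2 + enorm v ^+ 2).

Definition gradx (F : pt -> R) (z : pt) : 'rV[R]_n :=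
  \row_(i < n) derive F z (delta_mx 0 i : 'rV[R]_n, 0 : 'rV[R]_m).
Definition grady (F : pt -> R) (z : pt) : 'rV[R]_m :=
  \row_(j < m) derive F z (0 : 'rV[R]_n, delta_mx 0 j : 'rV[R]_m).

Definition C1 (F : pt -> R) : Prop :=
  (forall z, differentiable F z) /\ continuous (gradx F) /\ continuous (grady F).

Definition C2 (F : pt -> R) : Prop :=
  C1 F /\ (forall i, C1 (fun z => gradx F z 0 i)) /\
  (forall j, C1 (fun z => grady F z 0 j)).

Definition grad_lipschitz (F : pt -> R) (L : R) : Prop :=
  forall z w : pt,
    pnorm (gradx F z - gradx F w) (grady F z - grady F w)
    <= L * pnorm (z.1 - w.1) (z.2 - w.2).

Definition gradnorm (F : pt -> R) (z : pt) : R := pnorm (gradx F z) (grady F z).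

Definition hfun (g : pt -> R) (z : pt) : R := enorm (grady g z) ^+ 2.

Definition finf (f : pt -> R) : R := inf (range f).

Definition lam (f h : pt -> R) (rho : pt -> R) (alpha : R) (z : pt) : R :=
  if (gradx h z == 0) && (grady h z == 0) then 0
  else Num.max 0 (- dotv (gradx h z) (gradx f z) - dotv (grady h z) (grady f z)
                  + alpha * rho z)
       / (enorm (gradx h z) ^+ 2 + enorm (grady h z) ^+ 2).

Definition Dx (f h rho : pt -> R) (alpha : R) (z : pt) : 'rV[R]_n :=
  - gradx f z - lam f h rho alpha z *: gradx h z.
Definition Dy (f h rho : pt -> R) (alpha : R) (z : pt) : 'rV[R]_m :=
  - grady f z - lam f h rho alpha z *: grady h z.

Fixpoint iter_alg (f h rho : pt -> R) (alpha gamma : R) (z0 : pt) (k : nat) : pt :=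
  match k with
  | 0 => z0
  | k'.+1 => let z := iter_alg f h rho alpha gamma z0 k' in
             (z.1 + gamma *: Dx f h rho alpha z, z.2 + gamma *: Dy f h rho alpha z)
  end.

End Defs.

From HB Require Import structures.
From mathcomp Require Import all_boot all_order all_algebra.
From mathcomp Require Import all_classical all_reals all_analysis.
From mathcomp Require Import ring lra.
Import Order.TTheory GRing.Theory Num.Theory.
Import numFieldNormedType.Exports.
Set Implicit Arguments. Unset Strict Implicit. Unset Printing Implicit Defensive.
Local Open Scope ring_scope.
Local Open Scope classical_set_scope.

(* By the descent lemma for functions with Lipschitz gradient, one step changes f by at most
   gamma <grad f, Delta> + Lf gamma^2 |Delta|^2 / 2, and likewise for h.  The multiplier lam is
   chosen so that <grad h, Delta> <= 0 and <grad f, Delta> = alpha lam rho - |Delta|^2, where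
   lam |grad h| <= Cf + alpha sqrt h0 by Cauchy-Schwarz; this also bounds |Delta| by B_Delta.
   So f decreases by gamma |Delta|^2 / 2 up to a bias of order alpha^2, while h grows by at most
   gamma^2 Lh B_Delta^2 / 2 per step; telescoping resp. summing over K steps gives both bounds. *)

Section InnerProduct.
Variables (R : realType) (k : nat).
Implicit Types (u v w : 'rV[R]_k) (c : R).

Lemma dotvC u v : dotv u v = dotv v u.
Proof. by apply: eq_bigr => i _; rewrite mulrC. Qed.

Lemma dotvDl u v w : dotv (u + v) w = dotv u w + dotv v w.
Proof. by rewrite /dotv -big_split; apply: eq_bigr => i _; rewrite !mxE mulrDl. Qed.

Lemma dotvZl c u v : dotv (c *: u) v = c * dotv u v.
Proof. by rewrite /dotv mulr_sumr; apply: eq_bigr => i _; rewrite !mxE mulrA. Qed.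

Lemma dotvNl u v : dotv (- u) v = - dotv u v.
Proof. by rewrite -(scaleN1r u) dotvZl mulN1r. Qed.

Lemma dotvBl u v w : dotv (u - v) w = dotv u w - dotv v w.
Proof. by rewrite dotvDl dotvNl. Qed.

Lemma dotvDr u v w : dotv u (v + w) = dotv u v + dotv u w.
Proof. by rewrite dotvC dotvDl !(dotvC u). Qed.

Lemma dotvZr c u v : dotv u (c *: v) = c * dotv u v.
Proof. by rewrite dotvC dotvZl dotvC. Qed.

Lemma dotvNr u v : dotv u (- v) = - dotv u v.
Proof. by rewrite dotvC dotvNl dotvC. Qed.

Lemma dotvBr u v w : dotv u (v - w) = dotv u v - dotv u w.
Proof. by rewrite dotvDr dotvNr. Qed.

Lemma dotv_ge0 u : 0 <= dotv u u.
Proof. by apply: sumr_ge0 => i _; rewrite -expr2 sqr_ge0. Qed.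

Lemma sqr_enorm u : enorm u ^+ 2 = dotv u u.
Proof. by rewrite sqr_sqrtr // dotv_ge0. Qed.

End InnerProduct.

Lemma sqr_le_mul_of_quadratic_ge0 (R : realFieldType) (a b c : R) : 0 <= c ->
  (forall t, 0 <= a - 2 * t * b + t ^+ 2 * c) -> b ^+ 2 <= a * c.
Proof.
rewrite le_eqVlt => /predU1P [<- quad_ge0|c_gt0 quad_ge0].
  have [->|b_neq0] := eqVneq b 0; first by rewrite expr0n mulr0.
  have := quad_ge0 ((a + 1) / (2 * b)).
  suff -> : a - 2 * ((a + 1) / (2 * b)) * b + ((a + 1) / (2 * b)) ^+ 2 * 0 = -1 by lra.
  by field; rewrite b_neq0.
have := quad_ge0 (b / c).
suff -> : a - 2 * (b / c) * b + (b / c) ^+ 2 * c = (a * c - b ^+ 2) / c.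
  by rewrite pmulr_lge0 ?invr_gt0 // subr_ge0.
by field; rewrite gt_eqF.
Qed.

Section ProductSpace.
Variables (R : realType) (n m : nat).
Implicit Types (a u : 'rV[R]_n) (b v : 'rV[R]_m) (c : R).

Definition pdot a b u v := dotv a u + dotv b v.

Lemma pdotBl a b a' b' u v :
  pdot (a - a') (b - b') u v = pdot a b u v - pdot a' b' u v.
Proof. by rewrite /pdot !dotvBl; ring. Qed.

Lemma pnorm_ge0 a b : 0 <= pnorm a b.
Proof. exact: sqrtr_ge0. Qed.

Lemma sqr_pnorm a b : pnorm a b ^+ 2 = enorm a ^+ 2 + enorm b ^+ 2.
Proof. by rewrite sqr_sqrtr // addr_ge0 ?sqr_ge0. Qed.

Lemma sqr_pnorm_pdot a b : pnorm a b ^+ 2 = pdot a b a b.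
Proof. by rewrite sqr_pnorm !sqr_enorm. Qed.

Lemma pnorm0 : pnorm (0 : 'rV[R]_n) (0 : 'rV[R]_m) = 0.
Proof.
apply/eqP; rewrite -sqrf_eq0 sqr_pnorm_pdot /pdot /dotv !big1 ?addr0 // => i _;
  by rewrite mxE mul0r.
Qed.

Lemma pnormZ c a b : pnorm (c *: a) (c *: b) = `|c| * pnorm a b.
Proof.
rewrite /pnorm -sqrtr_sqr -sqrtrM ?sqr_ge0 //; congr Num.sqrt.
by rewrite !sqr_enorm !(dotvZl, dotvZr); ring.
Qed.

Lemma pnormN a b : pnorm (- a) (- b) = pnorm a b.
Proof. by rewrite -(scaleN1r a) -(scaleN1r b) pnormZ normrN normr1 mul1r. Qed.

(* Cauchy--Schwarz, from the nonnegativity of [t |-> pnorm (a - t u) (b - t v) ^+ 2]. *)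
Lemma pdot_le_pnorm a b u v : pdot a b u v <= pnorm a b * pnorm u v.
Proof.
apply: le_trans (ler_norm _) _.
rewrite -ler_sqr ?nnegrE ?mulr_ge0 ?pnorm_ge0 // real_normK ?num_real // exprMn.
apply: sqr_le_mul_of_quadratic_ge0 => [|t]; first exact: sqr_ge0.
suff -> : pnorm a b ^+ 2 - 2 * t * pdot a b u v + t ^+ 2 * pnorm u v ^+ 2 =
          pnorm (a - t *: u) (b - t *: v) ^+ 2 by exact: sqr_ge0.
rewrite !sqr_pnorm_pdot /pdot !(dotvBl, dotvBr, dotvZl, dotvZr) (dotvC u a) (dotvC v b).
ring.
Qed.

Lemma pdot_pnorm0 a b u v : pnorm a b = 0 -> pdot a b u v = 0.
Proof.
move=> ab0; have := pdot_le_pnorm a b u v; have := pdot_le_pnorm a b (- u) (- v).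
by rewrite /pdot !dotvNr ab0 !mul0r; lra.
Qed.

Lemma pnormD a b u v : pnorm (a + u) (b + v) <= pnorm a b + pnorm u v.
Proof.
rewrite -ler_sqr ?nnegrE ?addr_ge0 ?pnorm_ge0 // sqrrD !sqr_pnorm_pdot.
have := pdot_le_pnorm a b u v.
rewrite /pdot !(dotvDl, dotvDr) (dotvC u a) (dotvC v b); lra.
Qed.

Lemma pdot_search_dir a b a' b' c :
  pdot a' b' (- a - c *: a') (- b - c *: b') = - pdot a' b' a b - c * pnorm a' b' ^+ 2.
Proof. by rewrite sqr_pnorm_pdot /pdot !(dotvBr, dotvNr, dotvZr); ring. Qed.

Lemma pdot_add_sqr_search_dir a b a' b' c :
  pdot a b (- a - c *: a') (- b - c *: b') + pnorm (- a - c *: a') (- b - c *: b') ^+ 2 =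
  c * (pdot a' b' a b + c * pnorm a' b' ^+ 2).
Proof.
rewrite !sqr_pnorm_pdot /pdot !(dotvBl, dotvBr, dotvNl, dotvNr, dotvZl, dotvZr).
by rewrite (dotvC a) (dotvC b); ring.
Qed.

End ProductSpace.

Section Gradient.
Variables (R : realType) (n m : nat).
Implicit Types (F : pt R n m -> R) (z w : pt R n m) (u : 'rV[R]_n) (v : 'rV[R]_m).

Lemma derive_gradx F w u : differentiable F w ->
  derive F w (u, 0) = dotv (gradx F w) u.
Proof.
move=> dF; rewrite deriveE //.
have -> : ((u, 0) : pt R n m) = \sum_(i < n) u 0 i *: (delta_mx 0 i, 0).
  rewrite {1}(row_sum_delta u) (big_morph (fun x => (x, 0) : pt R n m) (id1 := 0) (op1 := +%R)).
  - by apply: eq_bigr => i _; rewrite -[RHS]/(_ *: _, _ *: 0) scaler0.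
  - by move=> x y; rewrite -[RHS]/(x + y, 0 + 0) addr0.
  - by [].
rewrite linear_sum; apply: eq_bigr => i _.
by rewrite linearZ /= mxE deriveE // mulrC.
Qed.

Lemma derive_grady F w v : differentiable F w ->
  derive F w (0, v) = dotv (grady F w) v.
Proof.
move=> dF; rewrite deriveE //.
have -> : ((0, v) : pt R n m) = \sum_(j < m) v 0 j *: (0, delta_mx 0 j).
  rewrite {1}(row_sum_delta v) (big_morph (fun y => (0, y) : pt R n m) (id1 := 0) (op1 := +%R)).
  - by apply: eq_bigr => j _; rewrite -[RHS]/(_ *: 0, _ *: _) scaler0.
  - by move=> x y; rewrite -[RHS]/(0 + 0, x + y) addr0.
  - by [].
rewrite linear_sum; apply: eq_bigr => j _.
by rewrite linearZ /= mxE deriveE // mulrC.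
Qed.

Lemma derive_pdot F w u v : differentiable F w ->
  derive F w (u, v) = pdot (gradx F w) (grady F w) u v.
Proof.
move=> dF; rewrite /pdot -derive_gradx // -derive_grady // !deriveE // -linearD.
by rewrite -[(u, 0) + (0, v)]/(u + 0, 0 + v) addr0 add0r.
Qed.

Lemma is_derive_line F z d t : differentiable F (t *: d + z) ->
  is_derive t 1 (fun s : R => F (s *: d + z)) ('D_d F (t *: d + z)).
Proof.
move=> dF.
have quotE : (fun h : R => h^-1 *: ((fun s : R => F (s *: d + z)) (h *: 1 + t)
                                     - F (t *: d + z))) =
             (fun h : R => h^-1 *: (F (h *: d + (t *: d + z)) - F (t *: d + z))).
  by apply/funext => h /=; rewrite [h%:A]mulr1 scalerDl addrA.
have Fd : derivable (fun s : R => F (s *: d + z)) t 1.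
  by rewrite /derivable quotE; exact: diff_derivable.
apply: is_derive_eq; first exact: derivableP Fd.
by rewrite /derive quotE.
Qed.

Lemma pdot_grad_shift_le F L z u v x : grad_lipschitz F L -> 0 <= x ->
  pdot (gradx F (x *: u + z.1, x *: v + z.2) - gradx F z)
       (grady F (x *: u + z.1, x *: v + z.2) - grady F z) u v <= L * x * pnorm u v ^+ 2.
Proof.
move=> LF x_ge0; apply: le_trans (pdot_le_pnorm _ _ _ _) _.
have := LF (x *: u + z.1, x *: v + z.2) z.
rewrite /= !addrK pnormZ ger0_norm // => /(ler_wpM2r (pnorm_ge0 u v)).
by rewrite expr2 !mulrA.
Qed.

Lemma grad_lipschitz_descent F L z u v g :
  (forall w, differentiable F w) -> grad_lipschitz F L -> 0 <= g ->
  F (z.1 + g *: u, z.2 + g *: v) <=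
  F z + g * pdot (gradx F z) (grady F z) u v + L * g ^+ 2 / 2 * pnorm u v ^+ 2.
Proof.
case: z => z1 z2 /= dF LF; rewrite le_eqVlt => /predU1P [<-|g_gt0].
  by rewrite !scale0r !addr0 expr0n /= !(mul0r, mulr0, addr0) lexx.
set d : pt R n m := (u, v); set z : pt R n m := (z1, z2).
set G := pdot (gradx F z) (grady F z) u v; set c := L * pnorm u v ^+ 2 / 2.
pose phi s := F (s *: d + z) - (s * G + c * s ^+ 2).
have phi_derive (t : R) : is_derive t 1 phi ('D_d F (t *: d + z) - (G + c * (2 * t))).
  apply: is_deriveB; first exact: is_derive_line.
  apply: is_derive_eq; rewrite scaler0 add0r [G%:A]mulr1 [t%:A]mulr1.
  by rewrite -[c *: _]/(c * (t + t)); ring.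
have phi_nonincr : phi g <= phi 0.
  apply: (ler0_derive1_le_cc (a := 0) (b := g)); last exact: ltW.
  - by move=> x _; case: (phi_derive x).
  - move=> x; rewrite in_itv /= => /andP [x_gt0 _].
    rewrite derive1E derive_val -[x *: d + z]/(x *: u + z1, x *: v + z2) derive_pdot //.
    have := pdot_grad_shift_le (z1, z2) u v LF (ltW x_gt0).
    by rewrite /= pdotBl /c /G; lra.
  - by apply: derivable_within_continuous => x _; case: (phi_derive x).
  - by rewrite in_itv /= lexx ltW.
  - by rewrite in_itv /= lexx ltW.
move: phi_nonincr; rewrite /phi scale0r add0r mul0r expr0n /= mulr0 addr0 subr0.
rewrite -[g *: d + z]/(g *: u + z1, g *: v + z2) (addrC z1) (addrC z2) /c.
have -> : L * pnorm u v ^+ 2 / 2 * g ^+ 2 = L * g ^+ 2 / 2 * pnorm u v ^+ 2 by ring.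
lra.
Qed.

End Gradient.

Section AlgorithmStep.
Variables (R : realType) (n m : nat) (f h rho : pt R n m -> R) (z : pt R n m).
Variables (alpha s Cf : R).
Hypotheses (alpha_gt0 : 0 < alpha) (s_ge0 : 0 <= s).
Hypothesis rhoE : rho z = gradnorm h z * s.
Hypothesis gradf_le : gradnorm f z <= Cf.

Local Notation lamz := (lam f h rho alpha z).
Local Notation dx := (Dx f h rho alpha z).
Local Notation dy := (Dy f h rho alpha z).
Local Notation hf := (pdot (gradx h z) (grady h z) (gradx f z) (grady f z)).
Local Notation E := (alpha * rho z - hf).

Lemma lam_cases : (gradnorm h z = 0 /\ lamz = 0) \/
  (0 < gradnorm h z /\ lamz * gradnorm h z ^+ 2 = Num.max 0 E).
Proof.
rewrite /lam -sqr_pnorm -/(gradnorm h z).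
have -> : - dotv (gradx h z) (gradx f z) - dotv (grady h z) (grady f z) + alpha * rho z = E.
  by rewrite /pdot; ring.
have : 0 <= gradnorm h z := pnorm_ge0 _ _; rewrite le_eqVlt => /predU1P [r0|r_gt0].
  by left; split=> //; case: ifP => // _; rewrite -r0 expr0n invr0 mulr0.
right; split=> //; case: ifP => [/andP [/eqP gx0 /eqP gy0]|_].
  by move: r_gt0; rewrite /gradnorm gx0 gy0 pnorm0 ltxx.
by rewrite divfK // sqrf_eq0 gt_eqF.
Qed.

Lemma lam_ge0 : 0 <= lamz.
Proof.
rewrite /lam; case: ifP => // _.
by apply: divr_ge0; rewrite ?le_max ?lexx // addr_ge0 ?sqr_ge0.
Qed.

(* Complementary slackness: either [lam = 0] or the linearized constraint on [h] is active. *)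
Lemma lam_slackness : lamz * (lamz * gradnorm h z ^+ 2 - E) = 0.
Proof.
case: lam_cases => [[_ ->]|[r_gt0]]; first by rewrite mul0r.
have [_|_] := lerP E 0; last by move=> ->; rewrite subrr mulr0.
move=> /eqP; rewrite mulf_eq0 sqrf_eq0 (gt_eqF r_gt0) orbF => /eqP ->.
by rewrite mul0r.
Qed.

Lemma pdot_gradf_Delta :
  pdot (gradx f z) (grady f z) dx dy = alpha * lamz * rho z - pnorm dx dy ^+ 2.
Proof.
have := pdot_add_sqr_search_dir (gradx f z) (grady f z) (gradx h z) (grady h z) lamz.
rewrite -/(gradnorm h z) -/dx -/dy; have := lam_slackness; lra.
Qed.

Lemma pdot_gradh_Delta_le0 : pdot (gradx h z) (grady h z) dx dy <= 0.
Proof.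
rewrite pdot_search_dir -/(gradnorm h z).
case: lam_cases => [[r0 ->]|[_ ->]]; first by rewrite pdot_pnorm0 // mul0r !oppr0 addr0.
have : 0 <= alpha * rho z.
  by rewrite rhoE; exact: mulr_ge0 (ltW alpha_gt0) (mulr_ge0 (pnorm_ge0 _ _) s_ge0).
have : E <= Num.max 0 E by rewrite le_max lexx orbT.
lra.
Qed.

Lemma lam_gradnorm_le : lamz * gradnorm h z <= Cf + alpha * s.
Proof.
have Cf_ge0 : 0 <= Cf := le_trans (pnorm_ge0 _ _) gradf_le.
have as_ge0 : 0 <= alpha * s := mulr_ge0 (ltW alpha_gt0) s_ge0.
case: lam_cases => [[_ ->]|[r_gt0 lam_r]]; first by rewrite mul0r addr_ge0.
rewrite -(ler_pM2r r_gt0) -mulrA -expr2 lam_r ge_max mulr_ge0 ?addr_ge0 ?(ltW r_gt0) //=.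
have hf_ge : - hf <= gradnorm h z * Cf.
  apply: le_trans (ler_wpM2l (ltW r_gt0) gradf_le).
  have := pdot_le_pnorm (gradx h z) (grady h z) (- gradx f z) (- grady f z).
  by rewrite pnormN /pdot !dotvNr -opprD.
by rewrite rhoE; lra.
Qed.

Lemma pnorm_Delta_le : pnorm dx dy <= 2 * Cf + alpha * s.
Proof.
apply: le_trans (pnormD _ _ _ _) _.
rewrite pnormN -scalerN -(scalerN _ (grady h z)) pnormZ ger0_norm ?lam_ge0 // pnormN.
have -> : 2 * Cf + alpha * s = Cf + (Cf + alpha * s) by ring.
exact: lerD gradf_le lam_gradnorm_le.
Qed.

Lemma sqr_pnorm_Delta_le_f_decrease Lf gamma :
  (forall w, differentiable f w) -> grad_lipschitz f Lf -> 0 < gamma -> gamma * Lf <= 1 ->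
  pnorm dx dy ^+ 2 <= 2 / gamma * (f z - f (z.1 + gamma *: dx, z.2 + gamma *: dy))
                      + 2 * (alpha * s * (Cf + alpha * s)).
Proof.
move=> df LF gamma_gt0 gammaLf.
have := grad_lipschitz_descent z dx dy df LF (ltW gamma_gt0).
rewrite pdot_gradf_Delta rhoE; set D := pnorm dx dy ^+ 2; set B := alpha * s * (Cf + alpha * s).
set fz' := f (_, _) => descent.
have bias : alpha * lamz * (gradnorm h z * s) <= B.
  have -> : alpha * lamz * (gradnorm h z * s) = alpha * s * (lamz * gradnorm h z) by ring.
  by apply: ler_wpM2l; [exact: mulr_ge0 (ltW alpha_gt0) s_ge0 | exact: lam_gradnorm_le].
have curv : 0 <= gamma / 2 * D * (1 - gamma * Lf).
  by rewrite mulr_ge0 ?subr_ge0 // mulr_ge0 ?divr_ge0 ?(ltW gamma_gt0) // sqr_ge0.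
have key : gamma / 2 * D <= f z - fz' + gamma * B.
  by have := ler_wpM2l (ltW gamma_gt0) bias; move: curv descent; rewrite expr2; lra.
have -> : D = 2 / gamma * (gamma / 2 * D) by field; rewrite gt_eqF.
apply: le_trans (ler_wpM2l (divr_ge0 _ (ltW gamma_gt0)) key) _ => //.
by rewrite mulrDr mulrA divfK ?gt_eqF.
Qed.

Lemma h_step_le Lh gamma B :
  (forall w, differentiable h w) -> grad_lipschitz h Lh -> 0 <= Lh -> 0 <= gamma ->
  2 * Cf + alpha * s <= B ->
  h (z.1 + gamma *: dx, z.2 + gamma *: dy) <= h z + gamma ^+ 2 * Lh * B ^+ 2 / 2.
Proof.
move=> dh LH Lh_ge0 gamma_ge0 B_ge.
have := grad_lipschitz_descent z dx dy dh LH gamma_ge0.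
have := mulr_ge0_le0 gamma_ge0 pdot_gradh_Delta_le0.
have : Lh * gamma ^+ 2 / 2 * pnorm dx dy ^+ 2 <= Lh * gamma ^+ 2 / 2 * B ^+ 2.
  apply: ler_wpM2l; first by rewrite !mulr_ge0 ?sqr_ge0.
  have Delta_le := le_trans pnorm_Delta_le B_ge.
  by rewrite ler_sqr ?nnegrE ?pnorm_ge0 ?(le_trans (pnorm_ge0 _ _) Delta_le).
have -> : gamma ^+ 2 * Lh * B ^+ 2 / 2 = Lh * gamma ^+ 2 / 2 * B ^+ 2 by ring.
lra.
Qed.

End AlgorithmStep.

Section Averages.
Variable R : realFieldType.
Implicit Types (c u : nat -> R) (a d A lb : R).

Lemma mean_le_telescope c u a A lb K : (0 < K)%N -> 0 <= a ->
  (forall k, c k <= a * (u k - u k.+1) + A) -> lb <= u K ->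
  K%:R^-1 * \sum_(k < K) c k <= a * (u 0%N - lb) / K%:R + A.
Proof.
move=> K_gt0 a_ge0 step lb_le.
have sum_le : \sum_(k < K) c k <= a * (u 0%N - u K) + K%:R * A.
  elim: (K) => [|k IH]; first by rewrite big_ord0 subrr mulr0 mul0r addr0.
  by rewrite big_ord_recr /= mulrSr; have := step k; lra.
have K_neq0 : K%:R != 0 :> R by rewrite pnatr_eq0 -lt0n.
have -> : a * (u 0%N - lb) / K%:R + A = K%:R^-1 * (a * (u 0%N - lb) + K%:R * A) by field.
rewrite ler_wpM2l ?invr_ge0 ?ler0n //; apply: le_trans sum_le _.
by rewrite lerD2r ler_wpM2l // lerD2l lerN2.
Qed.

Lemma mean_le_linear_growth u d K : (0 < K)%N -> (forall k, u k.+1 <= u k + d) ->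
  K%:R^-1 * \sum_(k < K) u k <= u 0%N + d * ((K%:R - 1) / 2).
Proof.
move=> K_gt0 step.
have growth k : u k <= u 0%N + k%:R * d.
  by elim: k => [|k IH]; rewrite ?mul0r ?addr0 // mulrSr; have := step k; lra.
have sum_le : \sum_(k < K) u k <= K%:R * u 0%N + d * (K%:R * (K%:R - 1) / 2).
  elim: (K) => [|k IH]; first by rewrite big_ord0 !mul0r mulr0 addr0.
  by rewrite big_ord_recr /= mulrSr; have := growth k; lra.
have K_neq0 : K%:R != 0 :> R by rewrite pnatr_eq0 -lt0n.
have -> : u 0%N + d * ((K%:R - 1) / 2) =
          K%:R^-1 * (K%:R * u 0%N + d * (K%:R * (K%:R - 1) / 2)) by field.
by rewrite ler_wpM2l ?invr_ge0 ?ler0n.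
Qed.

End Averages.

(* For [2 alpha^2 < 1] the cross term [2 sg Cf] is absorbed by [(2 Cf - sg / 2)^2]. *)
Lemma descent_bias_le (R : realFieldType) (alpha Cf s sg : R) :
  0 < alpha -> 0 <= Cf -> 0 <= s -> s <= alpha * sg ->
  2 * (alpha * s * (Cf + alpha * s)) <= alpha ^+ 2 * ((2 * Cf + alpha ^+ 2 * sg) ^+ 2 + sg ^+ 2).
Proof.
move=> alpha_gt0 Cf_ge0 s_ge0 s_le.
have sg_ge0 : 0 <= sg by rewrite -(pmulr_rge0 _ alpha_gt0); exact: le_trans s_le.
set t := alpha ^+ 2; have t_ge0 : 0 <= t := sqr_ge0 _.
have mono : alpha * s * (Cf + alpha * s) <= t * sg * (Cf + t * sg).
  have as_le : alpha * s <= t * sg by rewrite /t expr2 -mulrA ler_pM2l.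
  have as_ge0 : 0 <= alpha * s := mulr_ge0 (ltW alpha_gt0) s_ge0.
  by apply: ler_pM => //; rewrite ?addr_ge0 // lerD2l.
apply: le_trans (ler_wpM2l (ler0n _ 2) mono) _.
suff quad : 2 * sg * Cf + 2 * t * sg ^+ 2 <= (2 * Cf + t * sg) ^+ 2 + sg ^+ 2.
  by have := ler_wpM2l t_ge0 quad; congr (_ <= _); ring.
have [t_ge|t_lt] := lerP 1 (2 * t).
  have : 0 <= Cf * sg * (2 * t - 1) by rewrite !mulr_ge0 // subr_ge0.
  have := sqr_ge0 (t - 1); have := sqr_ge0 (2 * Cf); nra.
have : 0 <= (2 * Cf - sg / 2) ^+ 2 := sqr_ge0 _.
have := mulr_ge0 (mulr_ge0 Cf_ge0 sg_ge0) t_ge0.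
have : 0 <= sg ^+ 2 * (1 - 2 * t) by rewrite mulr_ge0 ?sqr_ge0 // subr_ge0 (ltW t_lt).
have := mulr_ge0 (sqr_ge0 sg) (sqr_ge0 t).
nra.
Qed.

Unset Implicit Arguments.

Theorem theorem2 (R : realType) (n m : nat) (f g : pt R n m -> R)
  (Lf Cf Lh alpha C0 : R) (x0 : 'rV[R]_n) (y0 : 'rV[R]_m) (K : nat) :
  C1 f ->
  has_lbound (range f) ->
  0 < Lf -> grad_lipschitz f Lf ->
  (forall z, gradnorm f z <= Cf) ->
  C2 g ->
  C1 (hfun g) ->
  0 < Lh -> grad_lipschitz (hfun g) Lh ->
  0 < alpha -> 0 < C0 ->
  hfun g (x0, y0) <= alpha ^+ 2 * C0 ->
  (1 <= K)%N ->
  let h := hfun g in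
  let rho := fun z => gradnorm h z * Num.sqrt (h (x0, y0)) in
  let gamma := Num.min ((K%:R : R) `^ (- (2 / 3))) (1 / Lf) in
  let z := iter_alg f h rho alpha gamma (x0, y0) in
  let BD := 2 * Cf + alpha ^+ 2 * Num.sqrt C0 in
  (K%:R)^-1 * \sum_(k < K) (enorm (Dx f h rho alpha (z k)) ^+ 2
                           + enorm (Dy f h rho alpha (z k)) ^+ 2)
    <= 2 * (f (x0, y0) - finf f) / (gamma * K%:R) + alpha ^+ 2 * (BD ^+ 2 + C0)
  /\
  (K%:R)^-1 * \sum_(k < K) h (z k)
    <= alpha ^+ 2 * C0 + gamma ^+ 2 * Lh * BD ^+ 2 / 2 * ((K%:R - 1) / 2).
Proof.
move=> [df _] f_lb Lf_gt0 LfL gradf_le _ [dh _] Lh_gt0 LhL alpha_gt0 C0_gt0 h0_le K_gt0.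
move=> h rho gamma z BD; set s := Num.sqrt (h (x0, y0)).
have s_ge0 : 0 <= s := sqrtr_ge0 _.
have s_le : s <= alpha * Num.sqrt C0.
  rewrite -(ger0_norm (ltW alpha_gt0)) -sqrtr_sqr -sqrtrM ?sqr_ge0 //.
  exact: ler_wsqrtr.
have as_le : alpha * s <= alpha ^+ 2 * Num.sqrt C0 by rewrite expr2 -mulrA ler_pM2l.
have Cf_ge0 : 0 <= Cf := le_trans (pnorm_ge0 _ _) (gradf_le (x0, y0)).
have gamma_gt0 : 0 < gamma by rewrite /gamma lt_min powR_gt0 ?ltr0n // divr_gt0.
have gammaLf : gamma * Lf <= 1 by rewrite -ler_pdivlMr // /gamma ge_min lexx orbT.
have f_step k : pnorm (Dx f h rho alpha (z k)) (Dy f h rho alpha (z k)) ^+ 2 <=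
    2 / gamma * (f (z k) - f (z k.+1)) + 2 * (alpha * s * (Cf + alpha * s)).
  exact: (sqr_pnorm_Delta_le_f_decrease (z := z k) alpha_gt0 s_ge0 (erefl _) (gradf_le _)
                                        df LfL gamma_gt0 gammaLf).
have h_step k : h (z k.+1) <= h (z k) + gamma ^+ 2 * Lh * BD ^+ 2 / 2.
  apply: (h_step_le (z := z k) alpha_gt0 s_ge0 (erefl _) (gradf_le _) dh LhL (ltW Lh_gt0) (ltW gamma_gt0)).
  by rewrite lerD2l.
split.
  have finf_le : finf f <= f (z K) by apply: (ge_inf f_lb); exists (z K).
  under eq_bigr do rewrite -sqr_pnorm.
  apply: le_trans (mean_le_telescope K_gt0 (divr_ge0 _ (ltW gamma_gt0)) f_step finf_le) _ => //.
  have -> : 2 / gamma * (f (z 0%N) - finf f) / K%:R = 2 * (f (x0, y0) - finf f) / (gamma * K%:R).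
    by rewrite invfM /=; ring.
  rewrite lerD2l.
  by have := descent_bias_le alpha_gt0 Cf_ge0 s_ge0 s_le; rewrite sqr_sqrtr ?(ltW C0_gt0).
apply: le_trans (mean_le_linear_growth K_gt0 h_step) _.
by rewrite lerD2r.
Qed.
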